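(* Suppose $F\in\mathcal N$ is $n$ times renormalizable, and for $k=0,1,\dots,n$ let $F_k=R^kF$ and $\boldsymbol\delta_k=\pi_{\mathbf z}\circ F_k$. Then for $k=1,\dots,n$: $X_k(w)=X_{k-1}\circ\psi^k_c(w)-\mathbf q_{k-1}(\sigma_{k-1}x)$, $Y_k(w)=Z_{k-1}\circ\psi^k_c(w)\cdot\big[Y_{k-1}\circ\psi^k_v(w)+Z_{k-1}\circ\psi^k_v(w)\cdot\mathbf q_{k-1}(\sigma_{k-1}y)\big]$, $Z_k(w)=Z_{k-1}\circ\psi^k_c(w)\cdot Z_{k-1}\circ\psi^k_v(w)$.
   Context: Fix an integer $m\ge 1$ and a hypercube $B\subset\mathbb R^{m+2}$; points are $w=(x,y,\mathbf z)$, $\mathbf z=(z_1,\dots,z_m)$. An $(m+2)$-dimensional Hénon-like map is an analytic orientation-preserving map $F(x,y,\mathbf z)=(f(x)-\varepsilon(x,y,\mathbf z),\,x,\,\boldsymbol\delta(x,y,\mathbf z))$ on $B$ with $f$ unimodal, $\boldsymbol\delta=(\delta^1,\dots,\delta^m)$, $\|\varepsilon\|,\|\boldsymbol\delta\|\le C\bar\varepsilon$ for small $\bar\varepsilon>0$. Its renormalization is $RF=\Lambda\circ H\circ F^2\circ H^{-1}\circ\Lambda^{-1}$ where $H(x,y,\mathbf z)=(f(x)-\varepsilon(x,y,\mathbf z),\,y,\,\mathbf z-\boldsymbol\delta(y,f^{-1}(y),\mathbf 0))$ and $\Lambda^{-1}(w)=\sigma_0w$ is a dilation by a suitable constant. For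 the $k$-th renormalization $F_k(w)=(f_k(x)-\varepsilon_k(w),x,\boldsymbol\delta_k(w))$ with $H_k$, dilation $\Lambda_k^{-1}(w)=\sigma_kw$, set $\psi^{k+1}_v=H_k^{-1}\circ\Lambda_k^{-1}$ and $\psi^{k+1}_c=F_k\circ\psi^{k+1}_v$. Notation: $X_k=(\partial_x\delta^1_k,\dots,\partial_x\delta^m_k)^T$, $Y_k=(\partial_y\delta^1_k,\dots,\partial_y\delta^m_k)^T$, $Z_k$ the $m\times m$ matrix with $(j,i)$ entry $\partial_{z_i}\delta^j_k$ (and $X=X_0$, $Y=Y_0$, $Z=Z_0$); $\mathbf q_k(y)=\frac{d}{dy}\boldsymbol\delta_k(y,f_k^{-1}(y),\mathbf 0)$ (column vector). $\mathcal N$ is the set of renormalizable $(m+2)$-dimensional Hénon-like maps $F$ with $Y\circ F(w)+Z\circ F(w)\cdot X(w)=\mathbf 0$ for all $w\in\psi^1_c(B)\cup\psi^1_v(B)$. *)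

From Stdlib Require Import Reals ClassicalEpsilon.
From mathcomp Require Import ssreflect ssrfun ssrbool eqtype ssrnat seq choice fintype bigop finfun.
From mathcomp Require Import fingroup perm.

Set Implicit Arguments.
Unset Strict Implicit.

Open Scope R_scope.

(* A point w = (x, y, z) of R^(m+2), z = (z_1,...,z_m) indexed by 'I_m. *)
Definition Pt (m : nat) : Type := (R * R * ('I_m -> R))%type.

Definition px {m} (w : Pt m) : R := fst (fst w).
Definition py {m} (w : Pt m) : R := snd (fst w).
Definition pz {m} (w : Pt m) : 'I_m -> R := snd w.

Definition zero_z (m : nat) : 'I_m -> R := fun _ => 0.

(* coordinate number a: 0 -> x, 1 -> y, i+2 -> z_i *)
Definition coord {m} (w : Pt m) (a : nat) : R :=
  match a with
  | 0%nat => px w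
  | 1%nat => py w
  | S (S i) => oapp (pz w) 0 (insub i : option 'I_m)
  end.

Definition upd {m} (w : Pt m) (a : nat) (t : R) : Pt m :=
  match a with
  | 0%nat => (t, py w, pz w)
  | 1%nat => (px w, t, pz w)
  | S (S i) => (px w, py w, fun j : 'I_m => if nat_of_ord j == i then t else pz w j)
  end.

(* partial derivative with respect to coordinate number a (chosen by epsilon;
   meaningful when the partial derivative exists) *)
Definition pd {m} (a : nat) (g : Pt m -> R) (w : Pt m) : R :=
  epsilon (inhabits 0)
    (fun l => derivable_pt_lim (fun t => g (upd w a t)) (coord w a) l).

Definition deriv1 (g : R -> R) (t : R) : R :=
  epsilon (inhabits 0) (fun l => derivable_pt_lim g t l).

Definition sumI {m} (F : 'I_m -> R) : R := \big[Rplus/0]_(i < m) F i.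

Definition addP {m} (w h : Pt m) : Pt m :=
  (px w + px h, py w + py h, fun i => pz w i + pz h i).
Definition scaleP {m} (s : R) (w : Pt m) : Pt m :=
  (s * px w, s * py w, fun i => s * pz w i).
Definition nrm {m} (w : Pt m) : R :=
  Rabs (px w) + Rabs (py w) + sumI (fun i => Rabs (pz w i)).

Definition fdiff {m} (g : Pt m -> R) (w : Pt m) : Prop :=
  exists (a b : R) (c : 'I_m -> R), forall eps, 0 < eps ->
    exists del, 0 < del /\ forall h : Pt m, nrm h < del ->
      Rabs (g (addP w h) - g w - (a * px h + b * py h + sumI (fun i => c i * pz h i)))
        <= eps * nrm h.

Definition inB {m} (cen : Pt m) (r : R) (w : Pt m) : Prop :=
  Rabs (px w - px cen) < r /\ Rabs (py w - py cen) < r /\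
  forall i, Rabs (pz w i - pz cen i) < r.

(* Data of an (m+2)-dim Henon-like map F(x,y,z) = (f(x) - eps(x,y,z), x, delta(x,y,z)) *)
Record HData (m : nat) := { hf : R -> R; heps : Pt m -> R; hdel : 'I_m -> Pt m -> R }.

Definition Hmap {m} (D : HData m) (w : Pt m) : Pt m :=
  (hf D (px w) - heps D w, px w, fun j => hdel D j w).

Definition detJ {m} (D : HData m) (w : Pt m) : R :=
  \big[Rplus/0]_(s : 'S_(m.+2))
     ((if odd_perm s then -1 else 1) *
      \big[Rmult/1]_(a < m.+2) pd (s a) (fun u => coord (Hmap D u) a) w).

Definition unimodal (f : R -> R) (lo hi : R) : Prop :=
  exists c, lo < c < hi /\
    (forall s t, lo < s -> s < t -> t <= c -> f s < f t) /\
    (forall s t, c <= s -> s < t -> t < hi -> f t < f s).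

Definition HenonLike {m} (cen : Pt m) (r C eb : R) (D : HData m) : Prop :=
  (forall x, Rabs (x - px cen) < r -> exists l, derivable_pt_lim (hf D) x l) /\
  unimodal (hf D) (px cen - r) (px cen + r) /\
  (forall w, inB cen r w -> fdiff (heps D) w /\ forall j, fdiff (hdel D j) w) /\
  (forall w, inB cen r w -> Rabs (heps D w) <= C * eb /\ forall j, Rabs (hdel D j w) <= C * eb) /\
  (forall w, inB cen r w -> 0 < detJ D w).

Definition Hcoord {m} (D : HData m) (finv : R -> R) (w : Pt m) : Pt m :=
  (hf D (px w) - heps D w, py w,
   fun j => pz w j - hdel D j (py w, finv (py w), (@zero_z m))).

Definition Xf {m} (D : HData m) (j : 'I_m) (w : Pt m) : R := pd 0 (hdel D j) w.
Definition Yf {m} (D : HData m) (j : 'I_m) (w : Pt m) : R := pd 1 (hdel D j) w.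
Definition Zf {m} (D : HData m) (j i : 'I_m) (w : Pt m) : R := pd (nat_of_ord i).+2 (hdel D j) w.

Definition qv {m} (D : HData m) (finv : R -> R) (j : 'I_m) (y : R) : R :=
  deriv1 (fun t => hdel D j (t, finv t, (@zero_z m))) y.

(* One renormalization step: D' = R D, i.e. on B,
   F' = Lambda o H o F^2 o H^{-1} o Lambda^{-1}, Lambda^{-1} w = sigma w,
   where H is a C^1-diffeomorphism on a domain V (subset of B) with inverse branch
   psiv = H^{-1} o Lambda^{-1} : B -> V, and finv is the inverse branch of f used in H. *)
Definition renorm_step {m} (cen : Pt m) (r : R) (D D' : HData m) (sigma : R)
  (finv : R -> R) (V : Pt m -> Prop) (psiv : Pt m -> Pt m) : Prop :=
  sigma <> 0 /\
  (forall u, V u -> inB cen r u) /\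
  (forall u u', V u -> V u' -> Hcoord D finv u = Hcoord D finv u' -> u = u') /\
  (forall w, inB cen r w ->
     V (psiv w) /\
     Hcoord D finv (psiv w) = scaleP sigma w /\
     inB cen r (Hmap D (psiv w)) /\
     V (Hmap D (Hmap D (psiv w))) /\
     scaleP sigma (Hmap D' w) = Hcoord D finv (Hmap D (Hmap D (psiv w))) /\
     (forall a, (a < m.+2)%N -> fdiff (fun u => coord (psiv u) a) w) /\
     inB cen r (sigma * px w, finv (sigma * px w), (@zero_z m)) /\
     inB cen r (sigma * py w, finv (sigma * py w), (@zero_z m)) /\
     (exists l, derivable_pt_lim finv (sigma * px w) l) /\
     (exists l, derivable_pt_lim finv (sigma * py w) l) /\
     hf D (finv (sigma * px w)) = sigma * px w /\
     hf D (finv (sigma * py w)) = sigma * py w).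

(* the condition defining the class N:
   Y o F(w) + Z o F(w) . X(w) = 0 on psi_c(B) u psi_v(B) *)
Definition Ncond {m} (cen : Pt m) (r : R) (D : HData m) (psiv : Pt m -> Pt m) : Prop :=
  forall w, inB cen r w -> forall u, (u = Hmap D (psiv w) \/ u = psiv w) ->
    forall j : 'I_m,
      Yf D j (Hmap D u) + sumI (fun i => Zf D j i (Hmap D u) * Xf D i u) = 0.

(* Each partial derivative of delta_{k+1} is obtained by differentiating, along a
   coordinate line through w, the z-part of the renormalization,
     sigma * delta_{k+1}(w) = delta_k(F_k(psi_v(w))) - delta_k(sigma x, f_k^{-1}(sigma x), 0),
   by the chain rule.  The identity H o psi_v = sigma id determines every partial
   derivative of psi_v except those of its x-component; these enter only through
   Y_k o F_k + Z_k o F_k . X_k at psi_v(w), which vanishes because F_k is in N.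
   The formulas themselves show that the condition defining N passes from F_k to
   F_{k+1}: as H is injective, psi_v o F_{k+1} = F_k^2 o psi_v on psi_v(B), and then
   Y_{k+1} o F_{k+1} + Z_{k+1} o F_{k+1} . X_{k+1} = Z_k o psi_c . (Y_k o F_k + Z_k o F_k . X_k) o psi_v. *)
From Stdlib Require Import Reals Lra ClassicalEpsilon FunctionalExtensionality.
From HB Require Import structures.
From mathcomp Require Import ssreflect ssrfun ssrbool eqtype ssrnat seq fintype bigop.
Open Scope R_scope.
Set Implicit Arguments.
Unset Strict Implicit.

HB.instance Definition _ := Monoid.isComLaw.Build R 0 Rplus
  (fun x y z => esym (Rplus_assoc x y z)) Rplus_comm Rplus_0_l.

Section FiniteSums.
Variable m : nat.
Implicit Types F G : 'I_m -> R.

Lemma eq_sumI F G : (forall i, F i = G i) -> sumI F = sumI G.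
Proof. by move=> FG; apply: eq_bigr => i _. Qed.

Lemma sumI_add F G : sumI (fun i => F i + G i) = sumI F + sumI G.
Proof. exact: big_split. Qed.

Lemma sumI_scal c F : sumI (fun i => c * F i) = c * sumI F.
Proof.
apply: (big_rec2 (fun x y => x = c * y)); first by ring.
by move=> i x y _ ->; ring.
Qed.

Lemma sumI_zero : sumI (fun _ : 'I_m => 0) = 0.
Proof. exact: big1. Qed.

Lemma sumI_eq0 F : (forall i, F i = 0) -> sumI F = 0.
Proof. by move=> F0; rewrite -sumI_zero; apply: eq_sumI. Qed.

Lemma le_sumI F G : (forall i, F i <= G i) -> sumI F <= sumI G.
Proof.
move=> FG; apply: (big_rec2 (fun x y => x <= y)); first lra.
by move=> i x y _; have := FG i; lra.
Qed.

Lemma sumI_ge0 F : (forall i, 0 <= F i) -> 0 <= sumI F.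
Proof. by move=> F0; rewrite -sumI_zero; apply: le_sumI. Qed.

Lemma sumI_kronecker F (i : 'I_m) :
  sumI (fun l => F l * (if l == i then 1 else 0)) = F i.
Proof.
rewrite /sumI (bigD1 i) //= eqxx big1 => [|l /negbTE ->]; ring.
Qed.

Lemma exchange_sumI (H : 'I_m -> 'I_m -> R) :
  sumI (fun i => sumI (fun l => H i l)) = sumI (fun l => sumI (fun i => H i l)).
Proof. exact: exchange_big. Qed.

Lemma derivable_pt_lim_sumI (f : 'I_m -> R -> R) (l : 'I_m -> R) x :
  (forall i, derivable_pt_lim (f i) x (l i)) ->
  derivable_pt_lim (fun t => sumI (fun i => f i t)) x (sumI l).
Proof.
move=> fl; rewrite /sumI; elim: (index_enum _) => [|i s IH].
  rewrite big_nil; apply: (derivable_pt_lim_ext (fun _ => 0)).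
    by move=> t; rewrite big_nil.
  exact: derivable_pt_lim_const.
rewrite big_cons; apply: (derivable_pt_lim_ext (fun t => f i t + \big[Rplus/0]_(j <- s) f j t)).
  by move=> t; rewrite big_cons.
exact: derivable_pt_lim_plus.
Qed.

Lemma sumI_transport_cancel (P Y q X : 'I_m -> R) (Z : 'I_m -> 'I_m -> R) :
  (forall i, Y i + sumI (fun l => Z i l * X l) = 0) ->
  sumI (fun i => P i * (Y i + sumI (fun l => Z i l * q l))) +
  sumI (fun i => sumI (fun l => P l * Z l i) * (X i - q i)) = 0.
Proof.
move=> YZX.
have -> : sumI (fun i => sumI (fun l => P l * Z l i) * (X i - q i)) =
          sumI (fun l => P l * sumI (fun i => Z l i * (X i - q i))).
  rewrite (eq_sumI (G := fun i => sumI (fun l => P l * Z l i * (X i - q i)))) => [|i].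
    rewrite exchange_sumI; apply: eq_sumI => l.
    by rewrite -sumI_scal; apply: eq_sumI => i; ring.
  by rewrite Rmult_comm -sumI_scal; apply: eq_sumI => l; ring.
rewrite -sumI_add; apply: sumI_eq0 => i.
rewrite -Rmult_plus_distr_l Rplus_assoc -sumI_add.
rewrite (eq_sumI (G := fun l => Z i l * X l)) => [|l]; last ring.
by rewrite YZX; ring.
Qed.

End FiniteSums.

Lemma epsilon_derivative f x l : derivable_pt_lim f x l ->
  epsilon (inhabits 0) (fun l => derivable_pt_lim f x l) = l.
Proof.
move=> fl; apply: (uniqueness_limite f x _ _ _ fl).
exact: (epsilon_spec (inhabits 0) (fun l => derivable_pt_lim f x l) (ex_intro _ l fl)).
Qed.

Lemma derivable_pt_lim_increment_bound f x l : derivable_pt_lim f x l ->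
  exists d, 0 < d /\ forall h, Rabs h < d -> Rabs (f (x + h) - f x) <= (Rabs l + 1) * Rabs h.
Proof.
move=> fl; case: (fl 1 Rlt_0_1) => d Hd; exists d; split=> [|h hd]; first exact: cond_pos.
have [->|h0] := Req_dec h 0; first by rewrite Rplus_0_r Rminus_diag Rabs_R0; lra.
have Hq := Hd h h0 hd.
have -> : f (x + h) - f x = (f (x + h) - f x) / h * h by field.
rewrite Rabs_mult; apply: Rmult_le_compat_r; first exact: Rabs_pos.
have := Rabs_triang_inv ((f (x + h) - f x) / h) l; lra.
Qed.

Lemma derivable_pt_lim_small_o f x : f x = 0 ->
  (forall eps, 0 < eps -> exists d, 0 < d /\
     forall h, Rabs h < d -> Rabs (f (x + h)) <= eps * Rabs h) ->
  derivable_pt_lim f x 0.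
Proof.
move=> f0 small eps Heps.
have [d [Hd fd]] := small (eps / 2) ltac:(lra).
exists (mkposreal d Hd) => h h0 /= hd.
have Hh : 0 < Rabs h by apply: Rabs_pos_lt.
rewrite f0 !Rminus_0_r /Rdiv Rabs_mult Rabs_inv.
apply: (Rle_lt_trans _ (eps / 2 * Rabs h * / Rabs h)).
  by apply: Rmult_le_compat_r; [left; apply: Rinv_0_lt_compat | apply: fd].
rewrite Rmult_assoc Rinv_r; lra.
Qed.

Lemma uniform_delta (T : finType) (Q : T -> R -> Prop) :
  (forall i, exists d, 0 < d /\ forall h, Rabs h < d -> Q i h) ->
  exists d, 0 < d /\ forall i h, Rabs h < d -> Q i h.
Proof.
move=> HQ.
suff [d [Hd Hs]] : exists d, 0 < d /\ forall i, i \in enum T -> forall h, Rabs h < d -> Q i h.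
  by exists d; split=> // i; apply: Hs; rewrite mem_enum.
elim: (enum T) => [|i s [d [Hd Hs]]]; first by exists 1; split; [lra|].
have [di [Hdi Hi]] := HQ i.
exists (Rmin d di); split=> [|j]; first exact: Rmin_pos.
rewrite inE => /orP [/eqP -> | Hj] h Hh.
  by apply: Hi; have := Rmin_r d di; lra.
by apply: Hs => //; have := Rmin_l d di; lra.
Qed.

Section Differentials.
Variable m : nat.
Implicit Types (p q v w : Pt m) (g : Pt m -> R).

Definition subP p q : Pt m := (px p - px q, py p - py q, fun i => pz p i - pz q i).

Definition linP (a b : R) (c : 'I_m -> R) v : R :=
  a * px v + b * py v + sumI (fun i => c i * pz v i).

Definition has_fderiv g p a b c : Prop :=
  forall eps, 0 < eps -> exists del, 0 < del /\
    forall h, nrm h < del -> Rabs (g (addP p h) - g p - linP a b c h) <= eps * nrm h.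

Definition differential g p : Pt m -> R :=
  linP (pd 0 g p) (pd 1 g p) (fun i => pd (nat_of_ord i).+2 g p).

Definition unitP (k : nat) : Pt m := upd (0, 0, @zero_z m) k 1.

Lemma addP_subP p q : addP q (subP p q) = p.
Proof.
case: p => [[x y] z]; rewrite /addP /subP /px /py /pz /=.
by congr (_, _, _); try ring; apply: functional_extensionality => i; ring.
Qed.

Lemma linP_subP a b c p q : linP a b c (subP p q) = linP a b c p - linP a b c q.
Proof.
rewrite /linP /subP /px /py /pz /=.
have -> : sumI (fun i => c i * (snd p i - snd q i)) =
          sumI (fun i => c i * snd p i) + -1 * sumI (fun i => c i * snd q i).
  by rewrite -sumI_scal -sumI_add; apply: eq_sumI => i; ring.
ring.
Qed.

Lemma curve_increment_bound (γ : R -> Pt m) t0 v :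
  derivable_pt_lim (fun t => px (γ t)) t0 (px v) ->
  derivable_pt_lim (fun t => py (γ t)) t0 (py v) ->
  (forall i, derivable_pt_lim (fun t => pz (γ t) i) t0 (pz v i)) ->
  exists d, 0 < d /\ forall h, Rabs h < d ->
    nrm (subP (γ (t0 + h)) (γ t0)) <=
      Rabs h * ((Rabs (px v) + 1) + (Rabs (py v) + 1) + sumI (fun i => Rabs (pz v i) + 1)).
Proof.
move=> Hx Hy Hz.
have [dx [Hdx bx]] := derivable_pt_lim_increment_bound Hx.
have [dy [Hdy by_]] := derivable_pt_lim_increment_bound Hy.
have [dz [Hdz bz]] := uniform_delta (fun i => derivable_pt_lim_increment_bound (Hz i)).
exists (Rmin dx (Rmin dy dz)); split=> [|h Hh]; first by do 2?apply: Rmin_pos.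
have := Rmin_l dx (Rmin dy dz); have := Rmin_r dx (Rmin dy dz).
have := Rmin_l dy dz; have := Rmin_r dy dz => ? ? ? ?.
have Hsz : sumI (fun i => Rabs (pz (γ (t0 + h)) i - pz (γ t0) i)) <=
           Rabs h * sumI (fun i => Rabs (pz v i) + 1).
  rewrite -sumI_scal; apply: le_sumI => i; rewrite Rmult_comm; apply: bz; lra.
have := bx h ltac:(lra); have := by_ h ltac:(lra).
rewrite /nrm /subP /px /py /pz /= in Hsz *; nra.
Qed.

Lemma chain_rule_curve g (γ : R -> Pt m) t0 a b c v :
  has_fderiv g (γ t0) a b c ->
  derivable_pt_lim (fun t => px (γ t)) t0 (px v) ->
  derivable_pt_lim (fun t => py (γ t)) t0 (py v) ->
  (forall i, derivable_pt_lim (fun t => pz (γ t) i) t0 (pz v i)) ->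
  derivable_pt_lim (fun t => g (γ t)) t0 (linP a b c v).
Proof.
move=> Hg Hx Hy Hz; set p := γ t0.
have HL : derivable_pt_lim (fun t => linP a b c (γ t)) t0 (linP a b c v).
  apply: derivable_pt_lim_plus; first apply: derivable_pt_lim_plus;
    try apply: derivable_pt_lim_scal => //.
  by apply: derivable_pt_lim_sumI => i; apply: derivable_pt_lim_scal.
set rem := fun t => g (γ t) - g p - (linP a b c (γ t) - linP a b c p).
have Hrem : derivable_pt_lim rem t0 0.
  apply: derivable_pt_lim_small_o => [|eps Heps]; first by rewrite /rem /p /=; ring.
  set K := (Rabs (px v) + 1) + (Rabs (py v) + 1) + sumI (fun i => Rabs (pz v i) + 1).
  have HK : 0 < K.
    have : 0 <= sumI (fun i => Rabs (pz v i) + 1).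
      by apply: sumI_ge0 => i; have := Rabs_pos (pz v i); lra.
    have := Rabs_pos (px v); have := Rabs_pos (py v); rewrite /K; lra.
  have [dγ [Hdγ Hγ]] := curve_increment_bound Hx Hy Hz.
  have [del [Hdel Hg_del]] := Hg (eps / K) ltac:(apply: Rdiv_lt_0_compat; lra).
  exists (Rmin dγ (del / K)); split=> [|h Hh].
    by apply: Rmin_pos => //; apply: Rdiv_lt_0_compat.
  have HΔ := Hγ h (Rlt_le_trans _ _ _ Hh (Rmin_l _ _)).
  have HhK : Rabs h * K < del.
    have := Rlt_le_trans _ _ _ Hh (Rmin_r _ _).
    by move=> /(Rmult_lt_compat_r K _ _ HK); rewrite /Rdiv Rmult_assoc Rinv_l; lra.
  have := Hg_del _ (Rle_lt_trans _ _ _ HΔ HhK).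
  rewrite addP_subP linP_subP -/(rem (t0 + h)) => Hr.
  apply: (Rle_trans _ _ _ Hr).
  apply: (Rle_trans _ (eps / K * (Rabs h * K))).
    by apply: Rmult_le_compat_l => //; apply: Rlt_le; apply: Rdiv_lt_0_compat.
  right; field; lra.
have := derivable_pt_lim_plus _ _ _ _ _
  (derivable_pt_lim_plus _ _ _ _ _ Hrem
     (derivable_pt_lim_minus _ _ _ _ _ HL (derivable_pt_lim_const (linP a b c p) t0)))
  (derivable_pt_lim_const (g p) t0).
rewrite Rminus_0_r Rplus_0_l Rplus_0_r; apply: derivable_pt_lim_ext => t.
by rewrite /rem /plus_fct /minus_fct /fct_cte; ring.
Qed.

Lemma upd_coord p k : (k < m.+2)%N -> upd p k (coord p k) = p.
Proof.
case: p => [[x y] z]; case: k => [|[|i]] //= Hi.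
rewrite (insubT (fun j => (j < m)%N) Hi) /=; congr (_, _, _).
apply: functional_extensionality => j; rewrite /pz /=.
by case: eqP => // Ej; congr z; apply: val_inj.
Qed.

Lemma derivable_upd p k x :
  derivable_pt_lim (fun t => px (upd p k t)) x (px (unitP k)) /\
  derivable_pt_lim (fun t => py (upd p k t)) x (py (unitP k)) /\
  forall l, derivable_pt_lim (fun t => pz (upd p k t) l) x (pz (unitP k) l).
Proof.
have Hc := derivable_pt_lim_const; have Hi := derivable_pt_lim_id.
case: k => [|[|i]]; rewrite /unitP /upd /px /py /pz /=;
  (split; [|split]) => [|| l]; try exact: Hi; try exact: Hc.
by case: (nat_of_ord l == i); [exact: Hi | exact: Hc].
Qed.

Lemma pd_eq g p k l :
  derivable_pt_lim (fun t => g (upd p k t)) (coord p k) l -> pd k g p = l.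
Proof. exact: epsilon_derivative. Qed.

Lemma linP_unitP a b c :
  [/\ linP a b c (unitP 0) = a, linP a b c (unitP 1) = b &
      forall i : 'I_m, linP a b c (unitP (nat_of_ord i).+2) = c i].
Proof.
rewrite /linP /unitP /upd /px /py /pz /=.
have sum0 : sumI (fun i => c i * @zero_z m i) = 0.
  by rewrite -(sumI_zero m); apply: eq_sumI => i; rewrite /zero_z; ring.
split; rewrite ?sum0; try ring.
move=> i; rewrite -(sumI_kronecker c i) !Rmult_0_r !Rplus_0_l.
by apply: eq_sumI.
Qed.

Lemma differential_has_fderiv g p a b c :
  has_fderiv g p a b c -> differential g p = linP a b c.
Proof.
move=> Hg; have [L0 L1 Lz] := linP_unitP a b c.
have pdk k : (k < m.+2)%N -> pd k g p = linP a b c (unitP k).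
  move=> Hk; apply: pd_eq; have [Hx [Hy Hz]] := derivable_upd p k (coord p k).
  by apply: chain_rule_curve Hx Hy Hz; rewrite upd_coord.
have Ez : (fun i : 'I_m => pd (nat_of_ord i).+2 g p) = c.
  by apply: functional_extensionality => i; rewrite pdk ?Lz // !ltnS ltn_ord.
by rewrite /differential Ez !pdk // L0 L1.
Qed.

Lemma fdiff_chain g (γ : R -> Pt m) t0 v :
  fdiff g (γ t0) ->
  derivable_pt_lim (fun t => px (γ t)) t0 (px v) ->
  derivable_pt_lim (fun t => py (γ t)) t0 (py v) ->
  (forall i, derivable_pt_lim (fun t => pz (γ t) i) t0 (pz v i)) ->
  derivable_pt_lim (fun t => g (γ t)) t0 (differential g (γ t0) v).
Proof.
move=> [a [b [c Hg]]]; rewrite (differential_has_fderiv Hg).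
exact: chain_rule_curve.
Qed.

Lemma fdiff_chain_upd g (Φ : Pt m -> Pt m) w k v : (k < m.+2)%N ->
  fdiff g (Φ w) ->
  derivable_pt_lim (fun t => px (Φ (upd w k t))) (coord w k) (px v) ->
  derivable_pt_lim (fun t => py (Φ (upd w k t))) (coord w k) (py v) ->
  (forall i, derivable_pt_lim (fun t => pz (Φ (upd w k t)) i) (coord w k) (pz v i)) ->
  derivable_pt_lim (fun t => g (Φ (upd w k t))) (coord w k) (differential g (Φ w) v).
Proof.
move=> Hk Hg Hx Hy Hz; rewrite -[in differential _ (Φ w)](upd_coord w Hk).
by apply: (fdiff_chain (γ := fun t => Φ (upd w k t))) Hx Hy Hz; rewrite upd_coord.
Qed.

Lemma fdiff_partial g w k : fdiff g w -> (k < m.+2)%N ->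
  derivable_pt_lim (fun t => g (upd w k t)) (coord w k) (pd k g w).
Proof.
move=> Hg Hk; have [Hx [Hy Hz]] := derivable_upd w k (coord w k).
by have H := fdiff_chain_upd (Φ := id) Hk Hg Hx Hy Hz; rewrite (pd_eq H).
Qed.

Lemma inB_upd cen r w k : (k < m.+2)%N -> inB cen r w ->
  exists d, 0 < d /\ forall t, Rabs (t - coord w k) < d -> inB cen r (upd w k t).
Proof.
have shift t c c0 : Rabs (t - c) < r - Rabs (c - c0) -> Rabs (t - c0) < r.
  have := Rabs_triang (t - c) (c - c0).
  by rewrite (_ : t - c + (c - c0) = t - c0); [lra | ring].
move=> + [Hx [Hy Hz]]; case: k => [|[|i]] Hk.
- exists (r - Rabs (px w - px cen)); split=> [|t Ht]; first lra.
  by split; [exact: shift Ht | split].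
- exists (r - Rabs (py w - py cen)); split=> [|t Ht]; first lra.
  by split; [| split; [exact: shift Ht |]].
- have Hi : (i < m)%N by [].
  rewrite /= (insubT (fun j => (j < m)%N) Hi) /=; set i' : 'I_m := Sub i Hi.
  exists (r - Rabs (pz w i' - pz cen i')); split=> [|t Ht]; first by have := Hz i'; lra.
  split; [done | split; [done |]] => l; rewrite /pz /=.
  case: eqP => [El | _]; last exact: Hz.
  by rewrite (_ : l = i'); [exact: shift Ht | apply: val_inj].
Qed.

Lemma derivable_pt_lim_inB_ext cen r w k (f h : R -> R) l :
  (k < m.+2)%N -> inB cen r w ->
  (forall t, inB cen r (upd w k t) -> f t = h t) ->
  derivable_pt_lim f (coord w k) l -> derivable_pt_lim h (coord w k) l.
Proof.
move=> Hk Hw Hfh; have [d [Hd Hud]] := inB_upd Hk Hw.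
apply: (derivable_pt_lim_locally_ext _ _ _ (coord w k - d) (coord w k + d)); first lra.
by move=> t Ht; apply/Hfh/Hud/Rabs_def1; lra.
Qed.

End Differentials.

Arguments unitP {m}.

Lemma derivable_qv m (cen : Pt m) r C eb (D : HData m) finv j s :
  HenonLike cen r C eb D -> inB cen r (s, finv s, @zero_z m) ->
  (exists l, derivable_pt_lim finv s l) ->
  derivable_pt_lim (fun t => hdel D j (t, finv t, @zero_z m)) s (qv D finv j s).
Proof.
move=> [_ [_ [Hd _]]] HB [l Hl].
have := fdiff_chain (γ := fun t => (t, finv t, @zero_z m)) (v := (1, l, @zero_z m))
  (proj2 (Hd _ HB) j) (derivable_pt_lim_id s) Hl (fun _ => derivable_pt_lim_const 0 s).
by move=> H; rewrite /qv /deriv1 (epsilon_derivative H).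
Qed.

Section RenormalizationStep.
Variables (m : nat) (cen : Pt m) (r C eb : R) (D D' : HData m) (sigma : R)
  (finv : R -> R) (V : Pt m -> Prop) (psiv : Pt m -> Pt m).
Hypothesis HD : HenonLike cen r C eb D.
Hypothesis HR : renorm_step cen r D D' sigma finv V psiv.

Lemma psiv_coords v : inB cen r v ->
  [/\ px (Hmap D (psiv v)) = sigma * px v, py (psiv v) = sigma * py v &
      forall l, pz (psiv v) l =
        sigma * pz v l + hdel D l (sigma * py v, finv (sigma * py v), @zero_z m)].
Proof.
case: HR => _ [_ [_ Hall]] Hv; have [_ [Hc _]] := Hall v Hv.
have Hz l := f_equal (fun u => pz u l) Hc.
have := f_equal px Hc; have := f_equal py Hc.
rewrite /Hcoord /scaleP /Hmap /px /py /pz /= in Hz * => Ey Ex; split=> // l.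
by have := Hz l; rewrite Ey; lra.
Qed.

Lemma hdel_renorm v : inB cen r v -> forall j,
  hdel D' j v = / sigma * (hdel D j (Hmap D (psiv v)) -
                           hdel D j (sigma * px v, finv (sigma * px v), @zero_z m)).
Proof.
move=> Hv j; have [Ex _ _] := psiv_coords Hv.
case: HR => Hs [_ [_ Hall]]; have [_ [_ [_ [_ [Hs2 _]]]]] := Hall v Hv.
have := f_equal (fun u => pz u j) Hs2; rewrite /Hcoord /scaleP /=.
change (py (Hmap D (Hmap D (psiv v)))) with (px (Hmap D (psiv v))).
by rewrite Ex => <-; field.
Qed.

Section Direction.
Variables (w : Pt m) (k : nat).
Hypotheses (Hw : inB cen r w) (Hk : (k < m.+2)%N).

(* The velocity of psi_v along the k-th coordinate line through w; only its
   x-component is not determined by H o psi_v = sigma id. *)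
Definition dpsiv : Pt m :=
  (pd k (fun v => px (psiv v)) w, sigma * py (@unitP m k),
   fun l => sigma * pz (@unitP m k) l + qv D finv l (sigma * py w) * (sigma * py (@unitP m k))).

Definition dpsic : Pt m :=
  (sigma * px (@unitP m k), px dpsiv, fun l => differential (hdel D l) (psiv w) dpsiv).

Lemma derivable_psiv_upd :
  derivable_pt_lim (fun t => px (psiv (upd w k t))) (coord w k) (px dpsiv) /\
  derivable_pt_lim (fun t => py (psiv (upd w k t))) (coord w k) (py dpsiv) /\
  forall l, derivable_pt_lim (fun t => pz (psiv (upd w k t)) l) (coord w k) (pz dpsiv l).
Proof.
case: HR => _ [_ [_ Hall]]; have [_ [_ [_ [_ [_ [Hψ [_ [HBy [_ [Hfy _]]]]]]]]]] := Hall w Hw.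
have [_ [Uy Uz]] := derivable_upd w k (coord w k).
have Hy := derivable_pt_lim_scal _ sigma _ _ Uy.
split; first exact: fdiff_partial (Hψ 0%N isT) Hk.
split.
  apply: (derivable_pt_lim_inB_ext Hk Hw _ Hy) => t Ht.
  by have [_ -> _] := psiv_coords Ht.
move=> l; have Hq := derivable_qv l HD HBy Hfy.
rewrite -{1}(upd_coord w Hk) in Hq.
have := derivable_pt_lim_plus _ _ _ _ _ (derivable_pt_lim_scal _ sigma _ _ (Uz l))
  (derivable_pt_lim_comp _ _ _ _ _ Hy Hq).
apply: (derivable_pt_lim_inB_ext Hk Hw) => t Ht.
by have [_ _ ->] := psiv_coords Ht.
Qed.

Lemma derivable_psic_upd :
  derivable_pt_lim (fun t => px (Hmap D (psiv (upd w k t)))) (coord w k) (px dpsic) /\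
  derivable_pt_lim (fun t => py (Hmap D (psiv (upd w k t)))) (coord w k) (py dpsic) /\
  forall l, derivable_pt_lim (fun t => pz (Hmap D (psiv (upd w k t))) l) (coord w k) (pz dpsic l).
Proof.
have [_ [HVB [_ Hall]]] := HR; have [HVw _] := Hall w Hw.
have [_ [_ [HdB _]]] := HD.
have [Vx [Vy Vz]] := derivable_psiv_upd.
have [Ux _] := derivable_upd w k (coord w k).
split.
  apply: (derivable_pt_lim_inB_ext Hk Hw _ (derivable_pt_lim_scal _ sigma _ _ Ux)) => t Ht.
  by have [-> _ _] := psiv_coords Ht.
split=> // l.
exact: fdiff_chain_upd Hk (proj2 (HdB _ (HVB _ HVw)) l) Vx Vy Vz.
Qed.

Lemma derivable_hdel_renorm_upd j :
  derivable_pt_lim (fun t => hdel D' j (upd w k t)) (coord w k)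
    (/ sigma * (differential (hdel D j) (Hmap D (psiv w)) dpsic -
                qv D finv j (sigma * px w) * (sigma * px (@unitP m k)))).
Proof.
have [_ [_ [_ Hall]]] := HR.
have [_ [_ [HFB [_ [_ [_ [HBx [_ [Hfx _]]]]]]]]] := Hall w Hw.
have [_ [_ [HdB _]]] := HD.
have [Wx [Wy Wz]] := derivable_psic_upd.
have [Ux _] := derivable_upd w k (coord w k).
have HF := fdiff_chain_upd (Φ := fun u => Hmap D (psiv u)) Hk (proj2 (HdB _ HFB) j) Wx Wy Wz.
have Hq := derivable_qv j HD HBx Hfx; rewrite -{1}(upd_coord w Hk) in Hq.
have Hqx := derivable_pt_lim_comp _ _ _ _ _ (derivable_pt_lim_scal _ sigma _ _ Ux) Hq.
apply: (derivable_pt_lim_inB_ext Hk Hw _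
  (derivable_pt_lim_scal _ (/ sigma) _ _ (derivable_pt_lim_minus _ _ _ _ _ HF Hqx))).
by move=> t Ht; rewrite (hdel_renorm Ht).
Qed.

End Direction.

Hypothesis HN : Ncond cen r D psiv.

Lemma pd_hdel_renorm w k j : inB cen r w -> (k < m.+2)%N ->
  pd k (hdel D' j) w =
    Xf D j (Hmap D (psiv w)) * px (@unitP m k) -
    qv D finv j (sigma * px w) * px (@unitP m k) +
    sumI (fun i => Zf D j i (Hmap D (psiv w)) *
      (Yf D i (psiv w) * py (@unitP m k) +
       sumI (fun l => Zf D i l (psiv w) *
         (pz (@unitP m k) l + qv D finv l (sigma * py w) * py (@unitP m k))))).
Proof.
move=> Hw Hk; rewrite (pd_eq (derivable_hdel_renorm_upd Hw Hk j)).
have HNw := HN Hw (or_intror erefl) j.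
set A := px (dpsiv w k).
set S1 := sumI _ in HNw; set S2 := sumI _.
have inner : sumI (fun i => Zf D j i (Hmap D (psiv w)) * differential (hdel D i) (psiv w) (dpsiv w k)) =
             A * S1 + sigma * S2.
  rewrite /S1 /S2 -!sumI_scal -sumI_add; apply: eq_sumI => i.
  rewrite /differential /linP -/A.
  have -> : sumI (fun l => pd (nat_of_ord l).+2 (hdel D i) (psiv w) * pz (dpsiv w k) l) =
      sigma * sumI (fun l => Zf D i l (psiv w) *
        (pz (@unitP m k) l + qv D finv l (sigma * py w) * py (@unitP m k))).
    by rewrite -sumI_scal; apply: eq_sumI => l; rewrite /dpsiv /pz /Zf /=; ring.
  rewrite /dpsiv /py /Xf /Yf /=; ring.
rewrite /differential /linP -/(Xf D j _) -/(Yf D j _).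
have -> : sumI (fun i => pd (nat_of_ord i).+2 (hdel D j) (Hmap D (psiv w)) * pz (dpsic w k) i) =
          A * S1 + sigma * S2 by exact: inner.
rewrite (_ : Yf D j _ = - S1); last lra.
change (py (dpsic w k)) with A; change (px (dpsic w k)) with (sigma * px (@unitP m k)).
by field; case: HR.
Qed.

Lemma renorm_partials w j : inB cen r w ->
  Xf D' j w = Xf D j (Hmap D (psiv w)) - qv D finv j (sigma * px w) /\
  Yf D' j w =
    sumI (fun i => Zf D j i (Hmap D (psiv w)) *
      (Yf D i (psiv w) + sumI (fun l => Zf D i l (psiv w) * qv D finv l (sigma * py w)))) /\
  (forall i, Zf D' j i w = sumI (fun l => Zf D j l (Hmap D (psiv w)) * Zf D l i (psiv w))).
Proof.
have drop0 a b c : a * 0 - b * 0 + c = c by ring.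
move=> Hw; split; [|split].
- rewrite /Xf (pd_hdel_renorm (k := 0) j Hw isT) /unitP /upd /px /py /pz /=.
  rewrite sumI_eq0 => [|i]; first by rewrite /Xf; ring.
  by rewrite sumI_eq0 => [|l]; rewrite /zero_z; ring.
- rewrite /Yf (pd_hdel_renorm (k := 1) j Hw isT) /unitP /upd /px /py /pz /=.
  rewrite drop0; apply: eq_sumI => i.
  by rewrite Rmult_1_r; congr (_ * (_ + _)); apply: eq_sumI => l; rewrite /zero_z; ring.
- move=> i; have Hi : ((nat_of_ord i).+2 < m.+2)%N by rewrite !ltnS.
  rewrite [Zf D' j i w]/Zf (pd_hdel_renorm j Hw Hi) /unitP /upd /px /py /pz /=.
  rewrite drop0; apply: eq_sumI => l.
  rewrite Rmult_0_r Rplus_0_l -(sumI_kronecker (fun l' => Zf D l l' (psiv w)) i).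
  congr (_ * _).
  by apply: eq_sumI => l'; rewrite /zero_z Rmult_0_r Rplus_0_r.
Qed.

Lemma Ncond_renorm (D'' : HData m) sigma' finv' V' psiv' :
  renorm_step cen r D' D'' sigma' finv' V' psiv' -> Ncond cen r D' psiv'.
Proof.
move=> HR' w Hw u Hu j.
have [HuB HFuB] : inB cen r u /\ inB cen r (Hmap D' u).
  have [_ [HVB' [_ Hall']]] := HR'; have [HV1 [_ [HB1 [HV2 _]]]] := Hall' w Hw.
  by case: Hu => ->; split=> //; apply: HVB'.
(* H sends both points to [sigma * F' u] and is injective on V. *)
have psiv_F' : psiv (Hmap D' u) = Hmap D (Hmap D (psiv u)).
  have [_ [_ [Hinj Hall]]] := HR.
  have [HVp [Hcp _]] := Hall _ HFuB; have [_ [_ [_ [HV2 [Hs _]]]]] := Hall u HuB.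
  by apply: Hinj => //; rewrite Hcp Hs.
have [_ [EY EZ]] := renorm_partials j HFuB.
rewrite (eq_sumI (G := fun i =>
    sumI (fun l => Zf D j l (Hmap D (psiv (Hmap D' u))) * Zf D l i (psiv (Hmap D' u))) *
    (Xf D i (Hmap D (psiv u)) - qv D finv i (sigma * px u)))) => [|i]; last first.
  by rewrite EZ; have [-> _] := renorm_partials i HuB.
rewrite EY psiv_F'; change (py (Hmap D' u)) with (px u).
apply: sumI_transport_cancel => i.
exact: HN HuB _ (or_introl erefl) i.
Qed.

End RenormalizationStep.

Unset Implicit Arguments.
Set Strict Implicit.

Theorem lemma3p1 (m n : nat) (cen : Pt m) (r C eb : R)
  (D : nat -> HData m) (sigma : nat -> R) (finv : nat -> R -> R)
  (V : nat -> Pt m -> Prop) (psiv : nat -> Pt m -> Pt m) :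
  0 < r -> 0 < C -> 0 < eb ->
  (forall k, (k <= n)%N -> HenonLike cen r C eb (D k)) ->
  (forall k, (k < n)%N ->
     renorm_step cen r (D k) (D k.+1) (sigma k) (finv k) (V k) (psiv k)) ->
  Ncond cen r (D 0%nat) (psiv 0%nat) ->
  forall k, (k < n)%N -> forall w, inB cen r w -> forall j : 'I_m,
    let psic := Hmap (D k) (psiv k w) in
    let psv := psiv k w in
    Xf (D k.+1) j w = Xf (D k) j psic - qv (D k) (finv k) j (sigma k * px w) /\
    Yf (D k.+1) j w =
      sumI (fun i => Zf (D k) j i psic *
             (Yf (D k) i psv +
              sumI (fun l => Zf (D k) i l psv * qv (D k) (finv k) l (sigma k * py w)))) /\
    (forall i : 'I_m,
      Zf (D k.+1) j i w = sumI (fun l => Zf (D k) j l psic * Zf (D k) l i psv)).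
Proof.
move=> _ _ _ HH HR HN0.
have HN k : (k < n)%N -> Ncond cen r (D k) (psiv k).
  elim: k => [//|k IH] Hk.
  exact (Ncond_renorm (HH k (ltnW (ltnW Hk))) (HR k (ltnW Hk)) (IH (ltnW Hk)) (HR k.+1 Hk)).
move=> k Hk w Hw j psic psv.
exact (renorm_partials (HH k (ltnW Hk)) (HR k Hk) (HN k Hk) j Hw).
Qed.
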